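(* Let $n\ge 2$ and let $P$ be an $n\times n$ permutation matrix which is the leaf matrix of exactly one CNM of size $n$. Then $P$ has no nonzero entry on the main diagonal, i.e. $P_{i,i}=0$ for all $i$.
   Context: A complete non-ambiguous matrix (CNM) of size $n$ is an $n\times n$ matrix $M=(m_{i,j})$ with entries in $\{0,1\}$ whose support $T=\{(i,j): m_{i,j}=1\}$ (whose elements are called vertices) satisfies: (1) $(1,1)\in T$; (2) for every $p=(i,j)\in T$ with $p\neq(1,1)$, exactly one of the following holds: there is $(i',j)\in T$ with $i'<i$, or there is $(i,j')\in T$ with $j'<j$; (3) every row and every column of $M$ contains at least one vertex; (4) define the parent of $p=(i,j)\neq(1,1)$ to be $(i',j)$ with $i'<i$ maximal if such a vertex exists, and otherwise $(i,j')$ with $j'<j$ maximal; then every vertex is the parent of either zero or exactly two vertices. A vertex with no children is a leaf. The leaf matrix $p(M)$ is obtained from $M$ by replacing all non-leaf vertices by $0$ (it is a permutation matrix). A permutation matrix $P$ is ''the leaf matrix of exactly one CNM'' if there is exactly one CNM $M$ with $p(M)=P$. *)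

From mathcomp Require Import all_boot all_algebra all_fingroup.
Set Implicit Arguments. Unset Strict Implicit. Unset Printing Implicit Defensive.

(* 0/1 matrices are represented as boolean matrices 'M[bool]_n; indices are
   0-based, so the paper's (1,1) is the entry (i,j) with val i = val j = 0. *)

Definition is_root n (i j : 'I_n) : bool := (val i == 0) && (val j == 0).

Definition above n (M : 'M[bool]_n) (i j : 'I_n) : bool :=
  [exists k : 'I_n, (k < i) && M k j].
Definition leftof n (M : 'M[bool]_n) (i j : 'I_n) : bool :=
  [exists k : 'I_n, (k < j) && M i k].

Definition isparent n (M : 'M[bool]_n) (p c : 'I_n * 'I_n) : bool :=
  let: (a, b) := p in let: (i, j) := c in
  [&& M a b, M i j, ~~ is_root i j &
   if above M i j then
     [&& b == j, a < i & [forall k : 'I_n, ((a < k) && (k < i)) ==> ~~ M k j]]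
   else
     [&& a == i, b < j & [forall k : 'I_n, ((b < k) && (k < j)) ==> ~~ M i k]]].

Definition children n (M : 'M[bool]_n) (p : 'I_n * 'I_n) : {set 'I_n * 'I_n} :=
  [set c | isparent M p c].

Definition is_CNM n (M : 'M[bool]_n) : Prop :=
  (exists i j : 'I_n, is_root i j && M i j) /\
  (forall i j : 'I_n, M i j -> ~~ is_root i j ->
               (above M i j) (+) (leftof M i j)) /\
  (forall i : 'I_n, exists j : 'I_n, M i j) /\
            (forall j : 'I_n, exists i : 'I_n, M i j) /\
  (forall i j : 'I_n, M i j ->
               #|children M (i, j)| = 0 \/ #|children M (i, j)| = 2).

Definition is_leaf n (M : 'M[bool]_n) (i j : 'I_n) : bool :=
  M i j && (children M (i, j) == set0).

Definition leaf_matrix n (M : 'M[bool]_n) : 'M[bool]_n :=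
  \matrix_(i, j) is_leaf M i j.

Definition is_perm_matrix n (P : 'M[bool]_n) : Prop :=
  exists s : 'S_n, forall i j : 'I_n, P i j = (s i == j).

From mathcomp Require Import all_boot all_algebra all_fingroup.
Set Implicit Arguments. Unset Strict Implicit. Unset Printing Implicit Defensive.

(* A vertex of a CNM has a child below it exactly when some vertex lies below it
   in its column, so condition (4) says: a vertex has a vertex below it iff it has
   a right child.  Hence the leaves are exactly the bottom vertices of the columns,
   the rightmost vertex of each row is a leaf, and (4) can be checked locally.
   Let the leaf matrix be the permutation s with s k = k.  Since n >= 2 the root is
   not a leaf, so k > 0, and after transposing we may assume a vertex lies above the
   leaf (k,k); then row k contains only (k,k).  Let (a,k) be the nearest vertex
   above it and (a,r) its right child, and put rho = a if (a,k) has a vertex above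
   it, rho = k otherwise; row rho has no vertex left of column k.  Counting the
   leaves of the k columns left of column k, and then walking left along rows,
   yields a column c < k with vertices above and below row rho.  Moving the vertex (a,k) to (rho,c) keeps every column's
   bottom vertex and the local form of (4), so it gives a second CNM with the same
   leaf matrix. *)

Lemma ex_max_ord n (P : pred 'I_n) x : P x ->
  exists2 m, P m & forall y, P y -> y <= m.
Proof. by move=> Px; case: (arg_maxnP (fun i : 'I_n => val i) Px) => m Pm h; exists m. Qed.

Lemma ex_min_ord n (P : pred 'I_n) x : P x ->
  exists2 m, P m & forall y, P y -> m <= y.
Proof. by move=> Px; case: (arg_minnP (fun i : 'I_n => val i) Px) => m Pm h; exists m. Qed.

Lemma card_le1E (T : finType) (A : {set T}) :
  {in A &, forall x y, x = y} -> #|A| = (A != set0).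
Proof.
move=> Auniq; rewrite -card_gt0.
have : #|A| <= 1 by apply/card_le1_eqP => x y xA yA; apply: Auniq.
by case: #|A| => [|[]].
Qed.

Lemma pair_neql (T1 T2 : eqType) {x x' : T1} {y y' : T2} :
  x != x' -> (x, y) != (x', y').
Proof. by rewrite xpair_eqE => /negbTE ->. Qed.

Lemma pair_neqr (T1 T2 : eqType) {x x' : T1} {y y' : T2} :
  y != y' -> (x, y) != (x', y').
Proof. by rewrite xpair_eqE => /negbTE ->; rewrite andbF. Qed.

Lemma ltn_ord_neq n (i j : 'I_n) : i < j -> i != j.
Proof. by rewrite -val_eqE => /ltn_eqF ->. Qed.

Lemma gtn_ord_neq n (i j : 'I_n) : j < i -> i != j.
Proof. by rewrite -val_eqE => /gtn_eqF ->. Qed.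

Lemma gapP n (P : pred 'I_n) (lo hi : nat) :
  reflect (forall t : 'I_n, lo < t -> t < hi -> ~~ P t)
          [forall t : 'I_n, (lo < t) && (t < hi) ==> ~~ P t].
Proof.
apply: (iffP forallP) => [h t h1 h2|h t]; first by move: (h t); rewrite h1 h2.
by apply/implyP => /andP[h1 h2]; apply: h.
Qed.

Lemma not_root_row n {i j : 'I_n} : 0 < i -> ~~ is_root i j.
Proof. by rewrite /is_root lt0n => /negbTE ->. Qed.

Lemma not_root_col n {i j : 'I_n} : 0 < j -> ~~ is_root i j.
Proof. by rewrite /is_root lt0n => /negbTE ->; rewrite andbF. Qed.

Section Vertices.
Variables (n : nat) (M : 'M[bool]_n).
Implicit Types a b i j t u : 'I_n.

Definition below i j := [exists t : 'I_n, (i < t) && M t j].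

Definition right_child i j t :=
  [&& j < t, M i t, ~~ above M i t & [forall u : 'I_n, (j < u) && (u < t) ==> ~~ M i u]].

Definition has_right_child i j := [exists t : 'I_n, right_child i j t].

Lemma aboveP i j : reflect (exists2 t : 'I_n, t < i & M t j) (above M i j).
Proof.
apply: (iffP existsP) => [[t /andP[h1 h2]]|[t h1 h2]]; first by exists t.
by exists t; rewrite h1 h2.
Qed.

Lemma leftofP i j : reflect (exists2 t : 'I_n, t < j & M i t) (leftof M i j).
Proof.
apply: (iffP existsP) => [[t /andP[h1 h2]]|[t h1 h2]]; first by exists t.
by exists t; rewrite h1 h2.
Qed.

Lemma belowP i j : reflect (exists2 t : 'I_n, i < t & M t j) (below i j).
Proof.
apply: (iffP existsP) => [[t /andP[h1 h2]]|[t h1 h2]]; first by exists t.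
by exists t; rewrite h1 h2.
Qed.

Lemma above_vertex t i j : t < i -> M t j -> above M i j.
Proof. by move=> ti Mt; apply/aboveP; exists t. Qed.

Lemma below_vertex t i j : i < t -> M t j -> below i j.
Proof. by move=> it Mt; apply/belowP; exists t. Qed.

Lemma leftof_vertex t i j : t < j -> M i t -> leftof M i j.
Proof. by move=> tj Mt; apply/leftofP; exists t. Qed.

Lemma isparent_above a b i j : above M i j ->
  isparent M (a, b) (i, j) =
  [&& M a b, M i j, ~~ is_root i j, b == j, a < i &
      [forall t : 'I_n, (a < t) && (t < i) ==> ~~ M t j]].
Proof. by move=> h; rewrite /isparent h. Qed.

Lemma isparent_left a b i j : ~~ above M i j ->
  isparent M (a, b) (i, j) =
  [&& M a b, M i j, ~~ is_root i j, a == i, b < j &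
      [forall t : 'I_n, (b < t) && (t < j) ==> ~~ M i t]].
Proof. by move=> h; rewrite /isparent (negbTE h). Qed.

Lemma isparent_nearest_below i j t : M i j -> i < t -> M t j ->
  (forall u, i < u -> u < t -> ~~ M u j) -> isparent M (i, j) (t, j).
Proof.
move=> Mij it Mtj gap; have abv : above M t j by apply/aboveP; exists i.
rewrite isparent_above // Mij Mtj not_root_row ?eqxx ?it /=; last exact: leq_ltn_trans it.
exact/gapP.
Qed.

Lemma below_childP i j : M i j ->
  reflect (exists2 z, z \in children M (i, j) & above M z.1 z.2) (below i j).
Proof.
move=> Mij; apply: (iffP idP) => [/belowP[t0 it0 Mt0]|[[t j'] + /= abv]].
  have h0 : (i < t0) && M t0 j by rewrite it0 Mt0.
  case: (ex_min_ord (P := fun t => (i < t) && M t j) h0) => t /andP[it Mt] tmin.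
  exists (t, j); last exact: above_vertex it Mij.
  rewrite inE; apply: isparent_nearest_below => // u iu ut; apply/negP => Mu.
  by move: (tmin u); rewrite iu Mu leqNgt ut => /(_ isT).
rewrite inE isparent_above // => /and5P[_ Mt _ /eqP ej /andP[it _]].
by subst j'; apply/belowP; exists t.
Qed.

Lemma right_childP i j : M i j ->
  reflect (exists2 z, z \in children M (i, j) & ~~ above M z.1 z.2)
          (has_right_child i j).
Proof.
move=> Mij; apply: (iffP existsP) => [[t /and4P[jt Mt nabv gap]]|[[i' t] + /= nabv]].
  exists (i, t) => //; rewrite inE isparent_left // Mij Mt eqxx jt gap not_root_col //.
  exact: leq_ltn_trans (leq0n _) jt.
rewrite inE isparent_left // => /and5P[_ Mt _ /eqP ei /andP[jt gap]]; subst i'.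
by exists t; rewrite /right_child jt Mt nabv gap.
Qed.

Lemma below_child_uniq i j z z' :
  z \in children M (i, j) -> z' \in children M (i, j) ->
  above M z.1 z.2 -> above M z'.1 z'.2 -> z = z'.
Proof.
case: z z' => [t1 j1] [t2 j2] /= C1 C2 a1 a2; move: C1 C2.
rewrite !inE !isparent_above // => /and5P[_ M1 _ /eqP e1 /andP[it1 /gapP g1]].
move=> /and5P[_ M2 _ /eqP e2 /andP[it2 /gapP g2]]; subst j1 j2.
congr pair; apply: val_inj; case: (ltngtP t1 t2) => // lt.
- by move: (g2 _ it1 lt); rewrite M1.
- by move: (g1 _ it2 lt); rewrite M2.
Qed.

Lemma right_child_uniq i j z z' :
  z \in children M (i, j) -> z' \in children M (i, j) ->
  ~~ above M z.1 z.2 -> ~~ above M z'.1 z'.2 -> z = z'.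
Proof.
case: z z' => [i1 t1] [i2 t2] /= C1 C2 a1 a2; move: C1 C2.
rewrite !inE !isparent_left // => /and5P[_ M1 _ /eqP e1 /andP[jt1 /gapP g1]].
move=> /and5P[_ M2 _ /eqP e2 /andP[jt2 /gapP g2]]; subst i1 i2.
congr pair; apply: val_inj; case: (ltngtP t1 t2) => // lt.
- by move: (g2 _ jt1 lt); rewrite M1.
- by move: (g1 _ jt2 lt); rewrite M2.
Qed.

Lemma card_children i j : M i j ->
  #|children M (i, j)| = below i j + has_right_child i j.
Proof.
move=> Mij; set A := [set z | above M z.1 z.2].
have -> : below i j = (children M (i, j) :&: A != set0).
  apply/(below_childP Mij)/set0Pn => [[z Cz Az]|[z]].
    by exists z; apply/setIP; split; rewrite // inE.
  by move=> /setIP[Cz]; rewrite inE => Az; exists z.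
have -> : has_right_child i j = (children M (i, j) :\: A != set0).
  apply/(right_childP Mij)/set0Pn => [[z Cz Az]|[z]].
    by exists z; apply/setDP; split; rewrite // inE.
  by move=> /setDP[Cz]; rewrite inE => Az; exists z.
rewrite -(cardsID A) !card_le1E //.
- move=> z z' /setDP[Cz +] /setDP[Cz' +]; rewrite !inE => Az Az'.
  exact: right_child_uniq Cz Cz' Az Az'.
- move=> z z' /setIP[Cz +] /setIP[Cz' +]; rewrite !inE => Az Az'.
  exact: below_child_uniq Cz Cz' Az Az'.
Qed.
End Vertices.

Section CNM.
Variables (n : nat) (M : 'M[bool]_n).
Implicit Types i j t : 'I_n.

Lemma is_CNM_intro :
  (exists i j, is_root i j && M i j) ->
  (forall i j, M i j -> ~~ is_root i j -> above M i j (+) leftof M i j) ->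
  (forall i, exists j, M i j) -> (forall j, exists i, M i j) ->
  (forall i j, M i j -> below M i j = has_right_child M i j) ->
  is_CNM M.
Proof.
move=> H1 H2 H3 H3' bal; do ![split=> //] => i j Mij.
by rewrite card_children // bal //; case: has_right_child; [right | left].
Qed.

Hypothesis HM : is_CNM M.

Lemma is_CNM_balanced i j : M i j -> below M i j = has_right_child M i j.
Proof.
case: HM => _ [_ [_ [_ H4]]] Mij; have := H4 i j Mij.
by rewrite card_children //; case: below; case: has_right_child => // -[].
Qed.

Lemma is_leafE i j : is_leaf M i j = M i j && ~~ below M i j.
Proof.
rewrite /is_leaf -cards_eq0; case Mij: (M i j) => //=.
by rewrite card_children // (is_CNM_balanced Mij); case: has_right_child.
Qed.

Lemma is_CNM_xor i j :
  M i j -> ~~ is_root i j -> above M i j (+) leftof M i j.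
Proof. by case: HM => _ [H2 _]; apply: H2. Qed.

Lemma above_left_free i j :
  M i j -> ~~ is_root i j -> above M i j -> forall t, t < j -> ~~ M i t.
Proof.
move=> Mij nroot abv t tj; apply/negP => Mit.
by move: (is_CNM_xor Mij nroot); rewrite abv (leftof_vertex tj Mit).
Qed.

Lemma rightmost_vertex_leaf i j :
  M i j -> (forall t, j < t -> ~~ M i t) -> is_leaf M i j.
Proof.
move=> Mij right_free; rewrite is_leafE Mij (is_CNM_balanced Mij) /=.
by apply/existsP => -[t /and3P[jt Mt _]]; move: (right_free t jt); rewrite Mt.
Qed.

Lemma bottom_vertex_leaf i j :
  M i j -> (forall t, i < t -> ~~ M t j) -> is_leaf M i j.
Proof.
move=> Mij below_free; rewrite is_leafE Mij /=.
by apply/belowP => -[t it Mt]; move: (below_free t it); rewrite Mt.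
Qed.

End CNM.

Section LeafPermutation.
Variables (n : nat) (M : 'M[bool]_n) (s : 'S_n).
Hypothesis HM : is_CNM M.
Hypothesis leaf_s : forall i j, is_leaf M i j = (s i == j).
Implicit Types i j t : 'I_n.

Lemma leaf_vertex i : M i (s i).
Proof. by have := leaf_s i (s i); rewrite eqxx /is_leaf => /andP[]. Qed.

Lemma vertex_col_leq i j : M i j -> j <= s i.
Proof.
move=> Mij; case: (ex_max_ord (P := fun t => M i t) Mij) => m Mm mmax.
suff /eqP -> : s i == m by exact: mmax.
rewrite -leaf_s; apply: rightmost_vertex_leaf => // t mt; apply/negP => Mt.
by move: (mmax t Mt); rewrite leqNgt mt.
Qed.

Lemma vertex_row_leq i j : M i j -> i <= (s^-1)%g j.
Proof.
move=> Mij; case: (ex_max_ord (P := fun t => M t j) Mij) => m Mm mmax.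
suff /eqP <- : s m == j by rewrite permK; exact: mmax.
rewrite -leaf_s; apply: bottom_vertex_leaf => // t mt; apply/negP => Mt.
by move: (mmax t Mt); rewrite leqNgt mt.
Qed.

Lemma fixed_leaf_not_root z : 1 < n -> val z = 0 -> s z != z.
Proof.
move=> n1 z0; apply/eqP => sz.
have row0 j : M z j -> val j = 0.
  by move=> Mj; have := vertex_col_leq Mj; rewrite sz z0 leqn0 => /eqP.
have col0 i : M i z -> val i = 0.
  move=> Mi; have := vertex_row_leq Mi.
  by rewrite -{1}sz permK z0 leqn0 => /eqP.
pose o1 : 'I_n := Ordinal n1.
case: HM => _ [_ [H3 _]]; case: (H3 o1) => j Mj.
case: (ex_min_ord (P := fun t => M o1 t) Mj) => j0 Mj0 j0min.
have : above M o1 j0 (+) leftof M o1 j0 by apply: is_CNM_xor; rewrite ?not_root_row.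
have -> : leftof M o1 j0 = false.
  by apply/leftofP => -[t tj Mt]; move: (j0min t Mt); rewrite leqNgt tj.
rewrite addbF => /aboveP[t t1 Mt].
have tz : t = z by apply: val_inj; rewrite z0; move: t1; rewrite ltnS leqn0 => /eqP.
have j0z : j0 = z by apply: val_inj; rewrite z0; apply: row0; rewrite -tz.
by move: Mj0; rewrite j0z => /col0.
Qed.

End LeafPermutation.

Definition has_leaf_twin n (M : 'M[bool]_n) : Prop :=
  exists M2, [/\ is_CNM M2, forall i j, is_leaf M2 i j = is_leaf M i j & M2 <> M].

Definition move_vertex n (M : 'M[bool]_n) (p v : 'I_n * 'I_n) : 'M[bool]_n :=
  \matrix_(i, j) if (i, j) == v then true else if (i, j) == p then false else M i j.

Lemma move_vertex_to n (M : 'M[bool]_n) p v : move_vertex M p v v.1 v.2.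
Proof. by rewrite mxE -surjective_pairing eqxx. Qed.

Lemma move_vertex_from n (M : 'M[bool]_n) p v :
  p != v -> move_vertex M p v p.1 p.2 = false.
Proof. by rewrite mxE -surjective_pairing eqxx => /negbTE ->. Qed.

Lemma move_vertex_other n (M : 'M[bool]_n) p v i j :
  (i, j) != p -> (i, j) != v -> move_vertex M p v i j = M i j.
Proof. by rewrite mxE => /negbTE -> /negbTE ->. Qed.

Lemma exists_vertex_below_corner n (M : 'M[bool]_n) (s : 'S_n)
    (Ms : forall i, M i (s i)) (rho : 'I_n) (k : nat) (D : {set 'I_n}) :
  (forall i, s i < k -> i <= rho -> i \in D) ->
  #|D| < #|[set j : 'I_n | j < k]| ->
  exists y c : 'I_n, [/\ rho < y, c < k & M y c].
Proof.
move=> inD small.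
case: (boolP [exists y : 'I_n, [exists c : 'I_n, [&& rho < y, c < k & M y c]]]).
  by case/existsP => y /existsP[c /and3P[]]; exists y, c.
move=> /existsPn none; suff : #|[set j : 'I_n | j < k]| <= #|D| by rewrite leqNgt small.
rewrite -(card_preimset [set j : 'I_n | j < k] (@perm_inj _ s)).
apply: subset_leq_card.
apply/subsetP => i; rewrite !inE => sik; apply: inD => //.
rewrite leqNgt; apply/negP => ri.
by move: (none i) => /existsPn /(_ (s i)); rewrite ri sik Ms.
Qed.

Lemma exists_straddled_column n (M : 'M[bool]_n) (rho : 'I_n) (k : nat) :
  is_CNM M -> 0 < rho -> (forall j : 'I_n, j < k -> ~~ M rho j) ->
  forall y0 c0 : 'I_n, rho < y0 -> c0 < k -> M y0 c0 ->
  exists c x y : 'I_n, [/\ c < k, x < rho < y, M x c & M y c].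
Proof.
move=> HM rho0 row_free y c; have [m cm] : exists m, val c = m by exists (val c).
elim/ltn_ind: m c y cm => m IH c y cm ry ck Myc.
case: (boolP [exists x : 'I_n, (x < rho) && M x c]) => [/existsP[x /andP[xr Mx]]|none].
  by exists c, x, y; rewrite xr ry.
case: (ex_min_ord (P := fun t => M t c) Myc) => t0 Mt0 t0min.
case: (ltngtP t0 rho) => [t0r|rt0|/val_inj e].
- by move/existsPn: none => /(_ t0); rewrite t0r Mt0.
- have : above M t0 c (+) leftof M t0 c.
    by apply: is_CNM_xor; rewrite // not_root_row // (ltn_trans rho0 rt0).
  have -> : above M t0 c = false.
    by apply/aboveP => -[t tt0 Mt]; move: (t0min t Mt); rewrite leqNgt tt0.
  rewrite addFb => /leftofP[c' c'c Mc'].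
  by apply: (IH c' _ c' t0) => //; [rewrite -cm | exact: ltn_trans ck].
- by move: (row_free c ck); rewrite -e Mt0.
Qed.

Section Transpose.
Variables (n : nat) (M : 'M[bool]_n).
Hypothesis HM : is_CNM M.
Implicit Types a b i j : 'I_n.

Lemma above_trmx i j : above (trmx M) i j = leftof M j i.
Proof. by apply: eq_existsb => t; rewrite mxE. Qed.

Lemma leftof_trmx i j : leftof (trmx M) i j = above M j i.
Proof. by apply: eq_existsb => t; rewrite mxE. Qed.

Lemma is_rootC i j : is_root i j = is_root j i.
Proof. by rewrite /is_root andbC. Qed.

Lemma isparent_trmx a b i j :
  isparent (trmx M) (b, a) (j, i) = isparent M (a, b) (i, j).
Proof.
case Mij : (M i j); first last.
  by rewrite /isparent !mxE Mij /= andbF.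
case: (boolP (is_root i j)) => root_ij.
  by rewrite /isparent !mxE is_rootC root_ij /= !andbF.
have := is_CNM_xor HM Mij root_ij.
case abv : (above M i j) => lft; rewrite /= in lft.
- rewrite (isparent_above (M := M)) // isparent_left ?above_trmx //.
  rewrite !mxE is_rootC; congr [&& _, _, _, _, _ & _].
  by apply: eq_forallb => t; rewrite mxE.
- rewrite (isparent_left (M := M)) ?abv // isparent_above ?above_trmx //.
  rewrite !mxE is_rootC; congr [&& _, _, _, _, _ & _].
  by apply: eq_forallb => t; rewrite mxE.
Qed.

Lemma card_children_trmx i j :
  #|children (trmx M) (j, i)| = #|children M (i, j)|.
Proof.
pose swap (z : 'I_n * 'I_n) := (z.2, z.1).
have swapK : involutive swap by case.
rewrite -(card_preimset _ (inv_inj swapK)); apply: eq_card => -[a b].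
by rewrite !inE -isparent_trmx.
Qed.

End Transpose.

Lemma trmx_CNM n (M : 'M[bool]_n) : is_CNM M -> is_CNM (trmx M).
Proof.
move=> HM; have [[i [j /andP[root_ij Mij]]] [H2 [H3 [H3' H4]]]] := HM.
split; [|split; [|split; [|split]]].
- by exists j, i; rewrite mxE Mij is_rootC root_ij.
- move=> i' j'; rewrite mxE is_rootC => Mji root_ji.
  by rewrite above_trmx leftof_trmx addbC; apply: H2.
- by move=> i'; case: (H3' i') => j' Mj'; exists j'; rewrite mxE.
- by move=> j'; case: (H3 j') => i' Mi'; exists i'; rewrite mxE.
- by move=> i' j'; rewrite mxE card_children_trmx //; apply: H4.
Qed.

Lemma is_leaf_trmx n (M : 'M[bool]_n) i j :
  is_CNM M -> is_leaf (trmx M) i j = is_leaf M j i.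
Proof. by move=> HM; rewrite /is_leaf mxE -!cards_eq0 card_children_trmx. Qed.

Lemma leaf_twin_trmx n (M : 'M[bool]_n) :
  is_CNM M -> has_leaf_twin (trmx M) -> has_leaf_twin M.
Proof.
move=> HM [M2 [HM2 leaf2 neq2]]; exists (trmx M2); split; first exact: trmx_CNM.
- by move=> i j; rewrite is_leaf_trmx // leaf2 is_leaf_trmx.
- by move=> eM; apply: neq2; rewrite -eM trmxK.
Qed.

Section Agreement.
Variables (n : nat) (M M' : 'M[bool]_n).
Implicit Types i j m t : 'I_n.

Lemma above_eq i j :
  (forall t, t < i -> M' t j = M t j) -> above M' i j = above M i j.
Proof. by move=> eqM; apply: eq_existsb => t; case: ltnP => // /eqM ->. Qed.

Lemma leftof_eq i j :
  (forall t, t < j -> M' i t = M i t) -> leftof M' i j = leftof M i j.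
Proof. by move=> eqM; apply: eq_existsb => t; case: ltnP => // /eqM ->. Qed.

Lemma below_eq i j :
  (forall t, i < t -> M' t j = M t j) -> below M' i j = below M i j.
Proof. by move=> eqM; apply: eq_existsb => t; case: ltnP => // /eqM ->. Qed.

Lemma has_right_child_eq_upto i j m : j < m -> M i m ->
  (forall t, j < t -> t <= m -> M' i t = M i t) ->
  (forall t, j < t -> t <= m -> M i t -> above M' i t = above M i t) ->
  has_right_child M' i j = has_right_child M i j.
Proof.
have transfer (N N' : 'M[bool]_n) : j < m -> N' i m ->
    (forall t, j < t -> t <= m -> N i t = N' i t) ->
    (forall t, j < t -> t <= m -> N' i t -> above N i t = above N' i t) ->
    has_right_child N' i j -> has_right_child N i j.
  move=> jm N'm eqN eq_above /existsP[t /and4P[jt N't nabv /gapP gap]].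
  have tm : t <= m.
    by rewrite leqNgt; apply/negP => mt; move: (gap m jm mt); rewrite N'm.
  apply/existsP; exists t; rewrite /right_child jt eqN // N't eq_above // nabv /=.
  by apply/gapP => u ju ut; rewrite eqN ?gap // ltnW // (leq_trans ut tm).
move=> jm Mm eqM eq_above; have M'm : M' i m by rewrite eqM.
apply/idP/idP; apply: transfer => // t jt tm; rewrite ?eqM //.
by move=> Mt; rewrite eq_above.
Qed.

Lemma has_right_child_eq i j :
  (forall t, j < t -> M' i t = M i t) ->
  (forall t, j < t -> M i t -> above M' i t = above M i t) ->
  has_right_child M' i j = has_right_child M i j.
Proof.
move=> eqM eq_above.
case: (boolP [exists m : 'I_n, (j < m) && M i m]) => [/existsP[m /andP[jm Mm]]|none].
  by apply: (has_right_child_eq_upto jm Mm) => t jt _; [apply: eqM | apply: eq_above].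
have no_rc (N : 'M[bool]_n) :
    (forall t, j < t -> N i t = M i t) -> ~~ has_right_child N i j.
  move=> eqN; apply/existsP => -[t /and3P[jt Nt _]].
  by move/existsPn: none => /(_ t); rewrite jt -eqN // Nt.
by rewrite (negbTE (no_rc _ eqM)) (negbTE (no_rc _ (fun _ _ => erefl))).
Qed.

End Agreement.

(* (a,k) is the parent of the leaf (k,k) and the right child of (a,b); it moves to
   (k,c), where column c has vertices x above and y below row k. *)
Module MoveIntoLeafRow.
Section Configuration.
Variables (n : nat) (M : 'M[bool]_n) (a b k r c x y : 'I_n).
Implicit Types i j t : 'I_n.
Hypothesis HM : is_CNM M.
Hypotheses (Mab : M a b) (Mak : M a k) (Mar : M a r) (Mkk : M k k).
Hypotheses (Mxc : M x c) (Myc : M y c).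
Hypotheses (bk : b < k) (ak : a < k) (kr : k < r) (ck : c < k) (xk : x < k) (ky : k < y).
Hypothesis col_k : forall t, M t k -> t = a \/ t = k.
Hypothesis row_k : forall t, M k t -> t = k.
Hypothesis gap_a : forall t, b < t -> t < r -> t != k -> ~~ M a t.
Hypothesis nabv_ar : ~~ above M a r.

Let ak_neq : a != k := ltn_ord_neq ak.
Let ck_neq : c != k := ltn_ord_neq ck.
Let kc_neq : k != c := gtn_ord_neq ck.

Let M' := move_vertex M (a, k) (k, c).
Let M'kc : M' k c := move_vertex_to M (a, k) (k, c).
Let M'ak : M' a k = false := move_vertex_from M (pair_neql ak_neq).
Let M'E i j : (i, j) != (a, k) -> (i, j) != (k, c) -> M' i j = M i j :=
  @move_vertex_other n M (a, k) (k, c) i j.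

Lemma M'xc : M' x c.
Proof. by rewrite M'E ?(pair_neqr ck_neq) ?(pair_neql (ltn_ord_neq xk)). Qed.

Lemma M'yc : M' y c.
Proof. by rewrite M'E ?(pair_neqr ck_neq) ?(pair_neql (gtn_ord_neq ky)). Qed.

Lemma M'kk : M' k k.
Proof. by rewrite M'E ?(pair_neql (gtn_ord_neq ak)) ?(pair_neqr kc_neq). Qed.

Lemma M'ab : M' a b.
Proof. by rewrite M'E ?(pair_neqr (ltn_ord_neq bk)) ?(pair_neql ak_neq). Qed.

Lemma M'ar : M' a r.
Proof. by rewrite M'E ?(pair_neqr (gtn_ord_neq kr)) ?(pair_neql ak_neq). Qed.

Lemma M'_vertex i j : M' i j -> (i, j) != (k, c) -> M i j /\ (i, j) != (a, k).
Proof.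
move=> M'ij nv; have np : (i, j) != (a, k).
  by apply/eqP => -[ei ej]; move: M'ij; rewrite ei ej M'ak.
by rewrite -M'E.
Qed.

Lemma col'_k t : M' t k -> t = k.
Proof.
move=> M't; have [Mt np] := M'_vertex M't (pair_neqr kc_neq).
by case: (col_k Mt) => // eta; rewrite eta eqxx in np.
Qed.

Lemma row'_k t : M' k t -> t = c \/ t = k.
Proof.
move=> M't; case: (eqVneq t c) => [|tc]; [by left | right].
by have [/row_k] := M'_vertex M't (pair_neqr tc).
Qed.

Lemma not_above'_kk : ~~ above M' k k.
Proof. by apply/aboveP => -[t tk /col'_k etk]; rewrite etk ltnn in tk. Qed.

Lemma not_leftof'_kc : ~~ leftof M' k c.
Proof.
apply/leftofP => -[t tc /row'_k [etc|etk]]; first by rewrite etc ltnn in tc.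
by move: (ltn_trans tc ck); rewrite etk ltnn.
Qed.

Lemma above'_eq i j : M' i j -> (i, j) != (k, c) -> (i, j) != (k, k) ->
  above M' i j = above M i j.
Proof.
move=> M'ij nv nL; have [Mij np] := M'_vertex M'ij nv.
have jk : j != k.
  by apply/eqP => ejk; move: M'ij nL; rewrite ejk => /col'_k ->; rewrite eqxx.
case: (eqVneq j c) => [ejc|jc]; last first.
  by apply: above_eq => t _; rewrite M'E // pair_neqr.
subst j; case: (ltngtP i k) => [ik|ki|/val_inj eik]; last by rewrite eik eqxx in nv.
- apply: above_eq => t ti.
  by rewrite M'E ?(pair_neqr ck_neq) ?(pair_neql (ltn_ord_neq (ltn_trans ti ik))).
- by rewrite !(above_vertex (ltn_trans xk ki)) ?M'xc.
Qed.

Lemma leftof'_eq i j : M' i j -> (i, j) != (k, c) -> (i, j) != (k, k) ->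
  leftof M' i j = leftof M i j.
Proof.
move=> M'ij nv nL; have [Mij np] := M'_vertex M'ij nv.
have ik : i != k.
  apply/eqP => eik; move: M'ij nv nL; rewrite eik => /row'_k[] ->; rewrite eqxx //.
case: (eqVneq i a) => [eia|ia]; last first.
  by apply: leftof_eq => t _; rewrite M'E ?(pair_neql ia) ?(pair_neql ik).
subst i; case: (ltngtP j k) => [jk|kj|/val_inj ejk]; last by rewrite ejk eqxx in np.
- apply: leftof_eq => t tj.
  by rewrite M'E ?(pair_neqr (ltn_ord_neq (ltn_trans tj jk))) ?(pair_neql ak_neq).
- by rewrite !(leftof_vertex (ltn_trans bk kj)) ?M'ab.
Qed.

Lemma below'_eq i j : M' i j -> (i, j) != (k, c) -> below M' i j = below M i j.
Proof.
move=> M'ij nv; have [Mij np] := M'_vertex M'ij nv.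
case: (eqVneq j c) => [ejc|jc]; last first.
  apply: below_eq => t it; rewrite M'E ?(pair_neqr jc) //.
  case: (eqVneq j k) => [ejk|jk]; last exact: pair_neqr jk.
  move: M'ij; rewrite ejk => /col'_k eik; apply: pair_neql; apply: gtn_ord_neq.
  by rewrite (ltn_trans ak) // -eik.
subst j; case: (ltngtP i k) => [ik|ki|/val_inj eik]; last by rewrite eik eqxx in nv.
- by rewrite !(below_vertex (ltn_trans ik ky)) ?M'yc.
- apply: below_eq => t it.
  by rewrite M'E ?(pair_neqr ck_neq) ?(pair_neql (gtn_ord_neq (ltn_trans ki it))).
Qed.

Lemma above'_row_eq i t : i != k -> M i t -> (i, t) != (a, k) ->
  above M' i t = above M i t.
Proof.
move=> ik Mit np; have nv : (i, t) != (k, c) := pair_neql ik.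
by apply: above'_eq; rewrite ?M'E ?(pair_neql ik).
Qed.

Lemma has_right_child'_eq i j : M' i j -> (i, j) != (k, c) -> (i, j) != (a, b) ->
  has_right_child M' i j = has_right_child M i j.
Proof.
move=> M'ij nv nb; have [Mij np] := M'_vertex M'ij nv.
case: (eqVneq i k) => [eik|ik].
  subst i; have ejk : j = k by case: (row'_k M'ij) => // ejc; rewrite ejc eqxx in nv.
  subst j; apply: has_right_child_eq => t kt.
    rewrite M'E ?(pair_neql (gtn_ord_neq ak)) //.
    exact/pair_neqr/gtn_ord_neq/(ltn_trans ck kt).
  by move/row_k => etk; rewrite etk ltnn in kt.
case: (eqVneq i a) => [eia|ia]; last first.
  apply: has_right_child_eq => t _; first by rewrite M'E ?(pair_neql ia) ?(pair_neql ik).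
  by move=> Mit; apply: above'_row_eq; rewrite ?(pair_neql ia).
subst i; case: (ltngtP j k) => [jk|kj|/val_inj ejk]; last by rewrite ejk eqxx in np.
- have jb : j < b.
    case: (ltngtP j b) => [//|bj|/val_inj ejb]; last by rewrite ejb eqxx in nb.
    by move: (gap_a bj (ltn_trans jk kr) (ltn_ord_neq jk)); rewrite Mij.
  have neq_p t : t <= b -> (a, t) != (a, k).
    by move=> tb; apply/pair_neqr/ltn_ord_neq/(leq_ltn_trans tb bk).
  apply: (has_right_child_eq_upto jb Mab) => t _ tb.
    by rewrite M'E ?neq_p ?(pair_neql ak_neq).
  by move=> Mt; apply: above'_row_eq; rewrite ?neq_p.
- have neq_p t : j < t -> (a, t) != (a, k).
    by move=> jt; apply/pair_neqr/gtn_ord_neq/(ltn_trans kj jt).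
  apply: has_right_child_eq => t jt; first by rewrite M'E ?neq_p ?(pair_neql ak_neq).
  by move=> Mt; apply: above'_row_eq; rewrite ?neq_p.
Qed.

Lemma right_child_ab : right_child M a b k.
Proof.
rewrite /right_child bk Mak /=; apply/andP; split.
  apply/aboveP => -[t ta /col_k[]] et; move: ta; rewrite et ?ltnn //.
  by rewrite ltnNge ltnW.
apply/gapP => t bt tk; exact: gap_a bt (ltn_trans tk kr) (ltn_ord_neq tk).
Qed.

Lemma right_child'_ab : right_child M' a b r.
Proof.
rewrite /right_child (ltn_trans bk kr) M'ar.
rewrite above'_row_eq ?(pair_neqr (gtn_ord_neq kr)) // nabv_ar /=; apply/gapP => t bt tr.
case: (eqVneq t k) => [->|tk]; first by rewrite M'ak.
by rewrite M'E ?(pair_neqr tk) ?(pair_neql ak_neq) // gap_a.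
Qed.

Lemma right_child'_kc : right_child M' k c k.
Proof.
rewrite /right_child ck M'kk not_above'_kk /=.
apply/gapP => t ct tk; apply/negP => /row'_k[] et.
- by rewrite et ltnn in ct.
- by rewrite et ltnn in tk.
Qed.

Lemma below'_kc : below M' k c.
Proof. exact: below_vertex ky M'yc. Qed.

Lemma moved_CNM : is_CNM M'.
Proof.
have [[i0 [j0 /andP[root0 M0]]] [_ [H3 [H3' _]]]] := HM.
apply: is_CNM_intro.
- move: (root0) => /andP[/eqP i00 /eqP j00].
  have i0k : i0 < k by rewrite i00 (leq_ltn_trans _ ak).
  have j0k : j0 < k by rewrite j00 (leq_ltn_trans _ ak).
  exists i0, j0.
  by rewrite root0 M'E ?(pair_neqr (ltn_ord_neq j0k)) ?(pair_neql (ltn_ord_neq i0k)).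
- move=> i j M'ij nroot.
  case: (eqVneq (i, j) (k, c)) => [[-> ->]|nv].
    by rewrite (negbTE not_leftof'_kc) (above_vertex xk M'xc).
  case: (eqVneq (i, j) (k, k)) => [[-> ->]|nL].
    by rewrite (negbTE not_above'_kk) (leftof_vertex ck M'kc).
  have [Mij _] := M'_vertex M'ij nv.
  by rewrite above'_eq // leftof'_eq //; apply: is_CNM_xor.
- move=> i; case: (eqVneq i k) => [->|ik]; first by exists c.
  case: (eqVneq i a) => [->|ia].
    by exists b; apply: M'ab.
  by case: (H3 i) => j Mij; exists j; rewrite M'E ?(pair_neql ia) ?(pair_neql ik).
- move=> j; case: (eqVneq j c) => [->|jc]; first by exists k.
  case: (eqVneq j k) => [->|jk].
    by exists k; apply: M'kk.
  by case: (H3' j) => i Mij; exists i; rewrite M'E ?(pair_neqr jk) ?(pair_neqr jc).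
- move=> i j M'ij.
  case: (eqVneq (i, j) (k, c)) => [[-> ->]|nv].
    by rewrite below'_kc; apply/esym/existsP; exists k; apply: right_child'_kc.
  have [Mij _] := M'_vertex M'ij nv; rewrite below'_eq // (is_CNM_balanced HM Mij).
  case: (eqVneq (i, j) (a, b)) => [[-> ->]|nb]; last by rewrite has_right_child'_eq.
  have -> : has_right_child M a b by apply/existsP; exists k; apply: right_child_ab.
  by apply/esym/existsP; exists r; apply: right_child'_ab.
Qed.

Lemma moved_leaf i j : is_leaf M' i j = is_leaf M i j.
Proof.
rewrite (is_leafE moved_CNM) (is_leafE HM).
case: (eqVneq (i, j) (k, c)) => [[-> ->]|nv].
  rewrite below'_kc andbF; apply/esym/negbTE/negP => /andP[/row_k ekc _].
  by move: ck; rewrite ekc ltnn.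
case: (eqVneq (i, j) (a, k)) => [[-> ->]|np].
  by rewrite M'ak Mak (below_vertex ak Mkk).
rewrite M'E //; case Mij: (M i j) => //=.
by rewrite below'_eq // M'E.
Qed.

Lemma moved_leaf_twin : has_leaf_twin M.
Proof.
exists M'; split; [exact: moved_CNM | exact: moved_leaf |].
by move=> eM; move: M'ak; rewrite eM Mak.
Qed.

End Configuration.
End MoveIntoLeafRow.

(* (a,k) is the parent of the leaf (k,k) and lies below (a',k); it slides to (a,c),
   where column c has vertices x above and y below row a. *)
Module SlideLeftInRow.
Section Configuration.
Variables (n : nat) (M : 'M[bool]_n) (a a' k r c x y : 'I_n).
Implicit Types i j t : 'I_n.
Hypothesis HM : is_CNM M.
Hypotheses (Ma'k : M a' k) (Mak : M a k) (Mkk : M k k) (Mar : M a r).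
Hypotheses (Mxc : M x c) (Myc : M y c).
Hypotheses (a'a : a' < a) (ak : a < k) (kr : k < r) (ck : c < k) (xa : x < a) (ay : a < y).
Hypothesis row_a : forall t, t < r -> M a t -> t = k.
Hypothesis nabv_ar : ~~ above M a r.

Let M' := move_vertex M (a, k) (a, c).
Let M'ac : M' a c := move_vertex_to M (a, k) (a, c).
Let M'ak : M' a k = false := move_vertex_from M (pair_neqr (gtn_ord_neq ck)).
Let M'E i j : (i, j) != (a, k) -> (i, j) != (a, c) -> M' i j = M i j :=
  @move_vertex_other n M (a, k) (a, c) i j.

Lemma M'_row i j : i != a -> M' i j = M i j.
Proof. by move=> ia; rewrite M'E ?(pair_neql ia). Qed.

Lemma M'_col i j : j != k -> j != c -> M' i j = M i j.
Proof. by move=> jk jc; rewrite M'E ?(pair_neqr jk) ?(pair_neqr jc). Qed.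

Lemma M'_vertex i j : M' i j -> (i, j) != (a, c) -> M i j /\ (i, j) != (a, k).
Proof.
move=> M'ij nv; have np : (i, j) != (a, k).
  by apply/eqP => -[ei ej]; move: M'ij; rewrite ei ej M'ak.
by rewrite -M'E.
Qed.

Lemma row'_a j : M' a j -> j = c \/ r <= j.
Proof.
move=> M'j; case: (eqVneq j c) => [|jc]; [by left | right].
have [Mj np] := M'_vertex M'j (pair_neqr jc); rewrite leqNgt; apply/negP => jr.
by rewrite (row_a jr Mj) eqxx in np.
Qed.

Lemma not_leftof'_ac : ~~ leftof M' a c.
Proof.
apply/leftofP => -[t tc /row'_a[etc|rt]]; first by rewrite etc ltnn in tc.
by move: (leq_ltn_trans rt (ltn_trans tc (ltn_trans ck kr))); rewrite ltnn.
Qed.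

Lemma above'_eq i j : M' i j -> (i, j) != (a, c) -> above M' i j = above M i j.
Proof.
move=> M'ij nv; have [Mij np] := M'_vertex M'ij nv.
case: (ltngtP i a) => [ia|ai|/val_inj eia].
- by apply: above_eq => t ti; rewrite M'_row // ltn_ord_neq // (ltn_trans ti ia).
- case: (eqVneq j k) => [->|jk].
    by rewrite !(above_vertex (ltn_trans a'a ai)) // M'_row // ltn_ord_neq.
  case: (eqVneq j c) => [->|jc].
    by rewrite !(above_vertex (ltn_trans xa ai)) // M'_row // ltn_ord_neq.
  by apply: above_eq => t _; rewrite M'_col.
- subst i; apply: above_eq => t _; rewrite M'E //.
  + by apply: contraNneq np => -[_ ->].
  + by apply: contraNneq nv => -[_ ->].
Qed.

Lemma leftof'_eq i j : M' i j -> (i, j) != (a, c) -> leftof M' i j = leftof M i j.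
Proof.
move=> M'ij nv; case: (eqVneq i a) => [eia|ia]; last first.
  by apply: leftof_eq => t _; rewrite M'_row.
subst i; case: (row'_a M'ij) => [ejc|rj]; first by rewrite ejc eqxx in nv.
rewrite (leftof_vertex (ltn_trans ck (leq_trans kr rj)) M'ac).
by rewrite (leftof_vertex (leq_trans kr rj) Mak).
Qed.

Lemma below'_eq i j : M' i j -> (i, j) != (a, c) -> below M' i j = below M i j.
Proof.
move=> M'ij nv; have [Mij np] := M'_vertex M'ij nv.
case: (ltngtP i a) => [ia|ai|/val_inj eia].
- case: (eqVneq j k) => [->|jk].
    by rewrite !(below_vertex (ltn_trans ia ak)) // M'_row // gtn_ord_neq.
  case: (eqVneq j c) => [->|jc].
    by rewrite !(below_vertex (ltn_trans ia ay)) // M'_row // gtn_ord_neq.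
  by apply: below_eq => t _; rewrite M'_col.
- by apply: below_eq => t it; rewrite M'_row // gtn_ord_neq // (ltn_trans ai it).
- subst i; apply: below_eq => t _; rewrite M'E //.
  + by apply: contraNneq np => -[_ ->].
  + by apply: contraNneq nv => -[_ ->].
Qed.

Lemma has_right_child'_eq i j : M' i j -> (i, j) != (a, c) ->
  has_right_child M' i j = has_right_child M i j.
Proof.
move=> M'ij nv; case: (eqVneq i a) => [eia|ia]; last first.
  apply: has_right_child_eq => t _; first by rewrite M'_row.
  by move=> Mit; rewrite above'_eq ?M'_row ?(pair_neql ia).
subst i; case: (row'_a M'ij) => [ejc|rj]; first by rewrite ejc eqxx in nv.
have M'_right t : j < t -> M' a t = M a t.
  move=> jt; have kt := ltn_trans kr (leq_ltn_trans rj jt).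
  by rewrite M'_col ?gtn_ord_neq // (ltn_trans ck kt).
apply: has_right_child_eq => t jt; first exact: M'_right.
move=> Mt; rewrite above'_eq ?M'_right //.
exact/pair_neqr/gtn_ord_neq/(ltn_trans ck (ltn_trans kr (leq_ltn_trans rj jt))).
Qed.

Lemma below'_ac : below M' a c.
Proof. by apply: (below_vertex ay); rewrite M'_row // gtn_ord_neq. Qed.

Lemma right_child'_ac : right_child M' a c r.
Proof.
have cr : c < r := ltn_trans ck kr.
have M'ar : M' a r by rewrite M'_col ?gtn_ord_neq.
rewrite /right_child cr M'ar above'_eq ?(pair_neqr (gtn_ord_neq cr)) //.
rewrite nabv_ar /=; apply/gapP => t ct tr.
apply/negP => /row'_a[etc|rt]; first by rewrite etc ltnn in ct.
by move: (leq_ltn_trans rt tr); rewrite ltnn.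
Qed.

Lemma moved_CNM : is_CNM M'.
Proof.
have [[i0 [j0 /andP[root0 M0]]] [_ [H3 [H3' _]]]] := HM.
apply: is_CNM_intro.
- move: (root0) => /andP[/eqP i00 _].
  have i0a : i0 < a by rewrite i00 (leq_ltn_trans _ a'a).
  by exists i0, j0; rewrite root0 M'_row // ltn_ord_neq.
- move=> i j M'ij nroot.
  case: (eqVneq (i, j) (a, c)) => [[-> ->]|nv].
    by rewrite (negbTE not_leftof'_ac) (above_vertex xa) // M'_row // ltn_ord_neq.
  have [Mij _] := M'_vertex M'ij nv.
  by rewrite above'_eq // leftof'_eq //; apply: is_CNM_xor.
- move=> i; case: (eqVneq i a) => [->|ia]; first by exists c.
  by case: (H3 i) => j Mij; exists j; rewrite M'_row.
- move=> j; case: (eqVneq j c) => [->|jc]; first by exists a.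
  case: (eqVneq j k) => [->|jk]; first by exists k; rewrite M'_row // gtn_ord_neq.
  by case: (H3' j) => i Mij; exists i; rewrite M'_col.
- move=> i j M'ij; case: (eqVneq (i, j) (a, c)) => [[-> ->]|nv].
    by rewrite below'_ac; apply/esym/existsP; exists r; apply: right_child'_ac.
  have [Mij _] := M'_vertex M'ij nv.
  by rewrite below'_eq // has_right_child'_eq // (is_CNM_balanced HM Mij).
Qed.

Lemma moved_leaf i j : is_leaf M' i j = is_leaf M i j.
Proof.
rewrite (is_leafE moved_CNM) (is_leafE HM).
case: (eqVneq (i, j) (a, c)) => [[-> ->]|nv].
  rewrite below'_ac andbF; apply/esym/negbTE/negP => /andP[Mac _].
  by move: ck; rewrite (row_a (ltn_trans ck kr) Mac) ltnn.
case: (eqVneq (i, j) (a, k)) => [[-> ->]|np].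
  by rewrite M'ak Mak (below_vertex ak Mkk).
rewrite M'E //; case Mij: (M i j) => //=.
by rewrite below'_eq // M'E.
Qed.

Lemma moved_leaf_twin : has_leaf_twin M.
Proof.
exists M'; split; [exact: moved_CNM | exact: moved_leaf |].
by move=> eM; move: M'ak; rewrite eM Mak.
Qed.

End Configuration.
End SlideLeftInRow.

Section FixedDiagonalLeaf.
Variables (n : nat) (M : 'M[bool]_n) (s : 'S_n) (k : 'I_n).
Implicit Types a r i j t : 'I_n.
Hypothesis HM : is_CNM M.
Hypothesis leaf_s : forall i j, is_leaf M i j = (s i == j).
Hypothesis sk : s k = k.
Hypothesis abv_k : above M k k.

Lemma fixed_vertex : M k k.
Proof. by rewrite -{2}sk (leaf_vertex leaf_s). Qed.

Lemma fixed_gt0 : 0 < k.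
Proof. by case/aboveP: abv_k => t tk _; exact: leq_ltn_trans (leq0n t) tk. Qed.

Lemma fixed_row_left t : t < k -> ~~ M k t.
Proof.
by have := above_left_free HM fixed_vertex (not_root_row fixed_gt0) abv_k; apply.
Qed.

Lemma fixed_row t : M k t -> t = k.
Proof.
move=> Mt; have := vertex_col_leq HM leaf_s Mt; rewrite sk leq_eqVlt.
case/orP => [/eqP/val_inj //|tk]; by rewrite (negbTE (fixed_row_left tk)) in Mt.
Qed.

Lemma fixed_col_below t : k < t -> ~~ M t k.
Proof.
move=> kt; apply/negP => /(vertex_row_leq HM leaf_s).
by rewrite -{1}sk permK leqNgt kt.
Qed.

Lemma fixed_parent :
  exists a : 'I_n, [/\ a < k, M a k & forall t, a < t -> t < k -> ~~ M t k].
Proof.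
case/existsP: abv_k => t0 h0.
case: (ex_max_ord (P := fun t => (t < k) && M t k) h0) => a /andP[ak Mak] amax.
exists a; split => // t a_t tk; apply/negP => Mt.
by move: (amax t); rewrite tk Mt leqNgt a_t => /(_ isT).
Qed.

Lemma fixed_parent_right_child a : a < k -> M a k ->
  exists r : 'I_n, [/\ k < r, M a r, ~~ above M a r & forall t, k < t -> t < r -> ~~ M a t].
Proof.
move=> ak Mak; have := below_vertex ak fixed_vertex.
rewrite (is_CNM_balanced HM Mak) => /existsP[r /and4P[kr Mar nabv /gapP gap]].
by exists r; split.
Qed.

Lemma leaf_col_gt a r : M a r -> k < r -> k < s a.
Proof. by move=> Mar kr; apply: leq_trans kr (vertex_col_leq HM leaf_s Mar). Qed.

Lemma leaf_twin_parent_below a r :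
  a < k -> M a k -> k < r -> M a r -> ~~ above M a r ->
  (forall t, k < t -> t < r -> ~~ M a t) -> above M a k -> has_leaf_twin M.
Proof.
move=> ak Mak kr Mar nabv_ar gap_kr abv_a; case/aboveP: (abv_a) => a' a'a Ma'k.
have a0 : 0 < a := leq_ltn_trans (leq0n a') a'a.
have row_a_left := above_left_free HM Mak (not_root_col fixed_gt0) abv_a.
have row_a t : t < r -> M a t -> t = k.
  move=> tr Mt; case: (ltngtP t k) => [tk|kt|/val_inj //].
  - by rewrite (negbTE (row_a_left _ tk)) in Mt.
  - by rewrite (negbTE (gap_kr _ kt tr)) in Mt.
have [y0 [c0 [ay0 c0k My0]]] : exists y c : 'I_n, [/\ a < y, c < k & M y c].
  apply: (exists_vertex_below_corner (leaf_vertex leaf_s) (D := [set i : 'I_n | i < a])).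
  - move=> i si ia; rewrite inE ltn_neqAle ia andbT.
    apply: contraTneq si => /val_inj ->.
    by rewrite -leqNgt ltnW // (leaf_col_gt Mar kr).
  - apply: proper_card; apply/properP; split.
      by apply/subsetP => i; rewrite !inE => ia; apply: ltn_trans ia ak.
    by exists a; rewrite !inE ?ltnn ?ak.
have [c [x [y [ck /andP[xa ay] Mxc Myc]]]] :=
  exists_straddled_column HM a0 row_a_left ay0 c0k My0.
exact: (SlideLeftInRow.moved_leaf_twin HM Ma'k Mak fixed_vertex Mar Mxc Myc
          a'a ak kr ck xa ay row_a nabv_ar).
Qed.

Lemma leaf_twin_parent_right a r :
  a < k -> M a k -> (forall t, a < t -> t < k -> ~~ M t k) ->
  k < r -> M a r -> ~~ above M a r ->
  (forall t, k < t -> t < r -> ~~ M a t) -> ~~ above M a k -> has_leaf_twin M.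
Proof.
move=> ak Mak gap_ak kr Mar nabv_ar gap_kr nabv_a.
have col_k t : M t k -> t = a \/ t = k.
  move=> Mt; case: (ltngtP t a) => [ta|a_t|/val_inj]; [| |by left].
  - by rewrite (above_vertex ta Mt) in nabv_a.
  right; case: (ltngtP t k) => [tk|kt|/val_inj //].
  - by rewrite (negbTE (gap_ak _ a_t tk)) in Mt.
  - by rewrite (negbTE (fixed_col_below kt)) in Mt.
have := is_CNM_xor HM Mak (not_root_col fixed_gt0).
rewrite (negbTE nabv_a) => /existsP[b0 hb0].
case: (ex_max_ord (P := fun t => (t < k) && M a t) hb0) => b /andP[bk Mab] bmax.
have gap_a t : b < t -> t < r -> t != k -> ~~ M a t.
  move=> bt tr tk; case: (ltngtP t k) => [tlk|ktl|/val_inj etk].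
  - by apply/negP => Mt; move: (bmax t); rewrite tlk Mt leqNgt bt => /(_ isT).
  - exact: gap_kr ktl tr.
  - by rewrite etk eqxx in tk.
have [y0 [c0 [ky0 c0k My0]]] : exists y c : 'I_n, [/\ k < y, c < k & M y c].
  pose D := [set i : 'I_n | i < k] :\ a.
  apply: (exists_vertex_below_corner (leaf_vertex leaf_s) (D := D)).
  - move=> i si ik; rewrite !inE; apply/andP; split.
      apply: contraTneq si => ->.
      by rewrite -leqNgt ltnW // (leaf_col_gt Mar kr).
    rewrite ltn_neqAle ik andbT.
    by apply: contraTneq si => /val_inj ->; rewrite sk ltnn.
  - by rewrite (cardsD1 a) inE ak add1n ltnSn.
have [c [x [y [ck /andP[xk ky] Mxc Myc]]]] :=
  exists_straddled_column HM fixed_gt0 fixed_row_left ky0 c0k My0.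
exact: (MoveIntoLeafRow.moved_leaf_twin HM Mab Mak Mar fixed_vertex Mxc Myc
          bk ak kr ck xk ky col_k fixed_row gap_a nabv_ar).
Qed.

Lemma leaf_twin_fixed_above : has_leaf_twin M.
Proof.
have [a [ak Mak gap_ak]] := fixed_parent.
have [r [kr Mar nabv_ar gap_kr]] := fixed_parent_right_child ak Mak.
case: (boolP (above M a k)).
- exact: leaf_twin_parent_below ak Mak kr Mar nabv_ar gap_kr.
- exact: leaf_twin_parent_right ak Mak gap_ak kr Mar nabv_ar gap_kr.
Qed.

End FixedDiagonalLeaf.

Theorem lemma3p2 (n : nat) (P : 'M[bool]_n) :
  2 <= n -> is_perm_matrix P ->
  (exists! M : 'M[bool]_n, is_CNM M /\ leaf_matrix M = P) ->
  forall i : 'I_n, P i i = false.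
Proof.
move=> n2 [s hP] [M [[HM leafM] M_unique]] k.
have leaf_s i j : is_leaf M i j = (s i == j) by rewrite -hP -leafM mxE.
rewrite hP; apply/negbTE/eqP => sk.
suff [M2 [HM2 leaf2 neq]] : has_leaf_twin M.
  apply: neq; apply/esym/M_unique; split => //.
  by rewrite -leafM; apply/matrixP => i j; rewrite !mxE leaf2.
have [k0|k_gt0] := posnP k.
  by move: (fixed_leaf_not_root HM leaf_s n2 k0); rewrite sk eqxx.
have Mkk : M k k by rewrite -{2}sk (leaf_vertex leaf_s).
have := is_CNM_xor HM Mkk (not_root_row k_gt0).
case abv: (above M k k) => /= lft; first exact: leaf_twin_fixed_above HM leaf_s sk abv.
apply: leaf_twin_trmx => //.
apply: (leaf_twin_fixed_above (trmx_CNM HM) (s := s^-1) (k := k)).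
- move=> i j; rewrite is_leaf_trmx // leaf_s.
  by apply/eqP/eqP => <-; rewrite ?permK ?permKV.
- by rewrite -{1}sk permK.
- by rewrite above_trmx.
Qed.
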